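(* Let $q\ge 2$ and let $R\subseteq\mathbb{Z}[\tfrac1q]\rtimes\mathbb{Z}$ be a rational subset. If $R\subseteq\mathbb{Z}[\tfrac1q]\times\{0\}$, then there is $k\in\mathbb{N}$ with $R\subseteq\tfrac{1}{q^k}\mathbb{Z}\times\{0\}$.
   Context: $\mathbb{Z}[\tfrac1q]\rtimes\mathbb{Z}$ is the group of pairs $(r,m)$, $r\in\mathbb{Z}[\tfrac1q]=\{nq^i:n,i\in\mathbb{Z}\}$, $m\in\mathbb{Z}$, with $(r,m)(r',m')=(r+q^m r',m+m')$, generated by $(\pm1,0),(0,\pm1)$. A subset is rational if it is accepted by a finite automaton whose edges are labelled by these generators, i.e. it is the set of products of edge labels along runs from an initial to a final state. *)

From mathcomp Require Import all_boot all_order all_algebra.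
Set Implicit Arguments. Unset Strict Implicit. Unset Printing Implicit Defensive.
Import Order.TTheory GRing.Theory Num.Theory.
Local Open Scope ring_scope.

(* Elements of Z[1/q] ⋊ Z are pairs (r, m) with r : rat (in Z[1/q]) and m : int.
   The subgroup of rat * int generated by the generators below is exactly
   Z[1/q] ⋊ Z. *)

Definition in_Zq (q : nat) (r : rat) : Prop :=
  exists (n i : int), r = n%:~R * (q%:~R : rat) ^ i.

Definition bs_mul (q : nat) (x y : rat * int) : rat * int :=
  (x.1 + (q%:~R : rat) ^ x.2 * y.1, x.2 + y.2).
Definition bs_one : rat * int := (0, 0).

Inductive gen := GaP | GaN | GtP | GtN.

Definition gen_val (g : gen) : rat * int :=
  match g with
  | GaP => (1, 0) | GaN => (-1, 0) | GtP => (0, 1) | GtN => (0, -1)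
  end.

Fixpoint word_val (q : nat) (w : seq gen) : rat * int :=
  match w with
  | [::] => bs_one
  | g :: w' => bs_mul q (gen_val g) (word_val q w')
  end.

Record automaton := Automaton {
  state : finType;
  delta : state -> gen -> state -> bool;
  initial : pred state;
  final : pred state }.

Inductive run (A : automaton) : state A -> seq gen -> state A -> Prop :=
  | run_nil s : @run A s [::] s
  | run_cons s g s1 w s' :
      @delta A s g s1 -> @run A s1 w s' -> @run A s (g :: w) s'.

Definition accepted (q : nat) (A : automaton) (x : rat * int) : Prop :=
  exists s s' w, @initial A s /\ @final A s' /\ @run A s w s' /\ word_val q w = x.

From mathcomp Require Import all_boot all_order all_algebra.

(** Call the second coordinate of the value of a word its height. If every
  accepted word has height 0, then all prefixes of accepting runs that end in
  the same state p have the same height, namely minus the height of any suffix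
  leading from p to a final state. Comparing with a shortest run from an
  initial state to p, of length less than the number #|S| of states, shows that
  every prefix of an accepted word has height at least -#|S|. The first
  coordinate of the value of a word is the sum of +-q^h over its letters
  (+-1, 0), h being the height of the preceding prefix, so multiplying it by
  q^#|S| gives an integer. *)

Set Implicit Arguments.
Unset Strict Implicit.
Unset Printing Implicit Defensive.

Import Order.TTheory GRing.Theory Num.Theory.
Local Open Scope ring_scope.

Definition gen_height (g : gen) : int := (gen_val g).2.

Definition height (w : seq gen) : int := \sum_(g <- w) gen_height g.

Lemma word_val_snd q w : (word_val q w).2 = height w.
Proof. by elim: w => [|g w IH]; rewrite /height ?big_nil ?big_cons //= IH. Qed.

Lemma height_cat u v : height (u ++ v) = height u + height v.
Proof. exact: big_cat. Qed.

Lemma height_ge_size w : - (size w)%:Z <= height w.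
Proof.
elim: w => [|g w IH]; rewrite /height ?big_nil ?big_cons //= -addn1 PoszD opprD addrC.
by apply: lerD IH; case: g.
Qed.

Section FirstCoordinate.

Variables (q : nat) (q_gt0 : (0 < q)%N).

Let Q : rat := q%:~R.

Lemma word_val_fst_scaled_int (h : int) (w : seq gen) :
  (forall i, 0 <= h + height (take i w)) -> (word_val q w).1 * Q ^ h \is a Num.int.
Proof.
elim: w h => [|g w IH] h prefix_ge0 /=; first by rewrite mul0r.
have h_ge0 : 0 <= h by have := prefix_ge0 0%N; rewrite take0 /height big_nil addr0.
case: h h_ge0 prefix_ge0 => // n _ prefix_ge0.
rewrite mulrDl mulrAC -expfzDr ?intr_eq0 -?lt0n // rpredD //.
  by apply: rpredM; [case: (g) | apply/rpredX/intr_int].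
rewrite mulrC; apply: IH => i; have := prefix_ge0 i.+1.
by rewrite /= /height big_cons addrA [n%:Z + _]addrC.
Qed.

End FirstCoordinate.

Section Automaton.

Variable A : automaton.

Definition step (s s' : state A) : bool :=
  [|| delta s GaP s', delta s GaN s', delta s GtP s' | delta s GtN s'].

Lemma stepP s s' : reflect (exists g, delta s g s') (step s s').
Proof.
apply: (iffP or4P) => [[] | [[]]]; by [exists GaP | exists GaN | exists GtP | exists GtN
  | constructor 1 | constructor 2 | constructor 3 | constructor 4].
Qed.

Lemma run_cat (s p s' : state A) u v : run s u p -> run p v s' -> run s (u ++ v) s'.
Proof. by elim=> [//|s0 g s1 w s2 s0s1 _ IH] /IH; apply: run_cons. Qed.

Lemma run_split (s s' : state A) u v :
  run s (u ++ v) s' -> exists2 p, run s u p & run p v s'.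
Proof.
move e : (u ++ v) => w run_w.
elim: run_w u e => [s0|s0 g s1 w' s2 s0s1 run_w' IH] [|g' u] //= => [->|->|[-> /IH]].
- by exists s0; apply: run_nil.
- by exists s0; [apply: run_nil | apply: run_cons run_w'].
- by case=> p run_u run_v; exists p => //; apply: run_cons run_u.
Qed.

Lemma run_path (s p : state A) u : run s u p -> exists2 ps, path step s ps & p = last s ps.
Proof.
elim=> [s0|s0 g s1 w s2 s0s1 _ [ps s1ps ->]]; first by exists [::].
by exists (s1 :: ps) => //=; rewrite s1ps andbT; apply/stepP; exists g.
Qed.

Lemma path_run (s : state A) ps :
  path step s ps -> exists2 u, run s u (last s ps) & size u = size ps.
Proof.
elim: ps s => [|s1 ps IH] s /=; first by exists [::] => //; apply: run_nil.
move=> /andP[/stepP[g s_s1] /IH[u run_u size_u]].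
by exists (g :: u); [apply: run_cons run_u | rewrite /= size_u].
Qed.

Lemma run_shorten (s p : state A) u :
  run s u p -> exists2 u', run s u' p & (size u' < #|state A|)%N.
Proof.
move=> /run_path[ps /shortenP[ps' path_ps' uniq_ps' _] ->].
have [u' run_u' size_u'] := path_run path_ps'.
exists u' => //; rewrite size_u' -ltnS.
by rewrite -[(size ps').+1]/(size (s :: ps')) -(card_uniqP uniq_ps'); apply: max_card.
Qed.

Hypothesis accepted_height0 :
  forall (s s' : state A) w, initial s -> final s' -> run s w s' -> height w = 0.

Lemma accepted_prefix_height_ge (s s' : state A) w i :
  initial s -> final s' -> run s w s' -> - #|state A|%:Z <= height (take i w).
Proof.
move=> s_init s'_final; rewrite -{1}(cat_take_drop i w) => /run_split[p run_pre run_suf].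
have [u run_u size_u] := run_shorten run_pre.
have -> : height (take i w) = height u.
  apply: (@addIr _ (height (drop i w))); rewrite -!height_cat.
  rewrite (accepted_height0 s_init s'_final (run_cat run_u run_suf)).
  by rewrite (accepted_height0 s_init s'_final (run_cat run_pre run_suf)).
by apply: le_trans (height_ge_size u); rewrite lerN2 lez_nat ltnW.
Qed.

End Automaton.

Theorem mainTheorem7 (q : nat) (hq : (2 <= q)%N) (A : automaton) :
  (forall x, accepted q A x -> in_Zq q x.1 /\ x.2 = 0) ->
  exists k : nat, forall x, accepted q A x ->
    (exists n : int, x.1 = n%:~R / (q%:~R : rat) ^+ k) /\ x.2 = 0.
Proof.
move=> accepted_sub.
have q_gt0 : (0 < q)%N by apply: leq_trans hq.
have height0 (s s' : state A) w : initial s -> final s' -> run s w s' -> height w = 0.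
  move=> s_init s'_final run_w.
  have acc_w : accepted q A (word_val q w) by exists s, s', w.
  by rewrite -(word_val_snd q); case: (accepted_sub _ acc_w).
exists #|state A| => _ [s [s' [w [s_init [s'_final [run_w <-]]]]]].
split; last by rewrite word_val_snd (height0 s s' w).
have /intrP[n scaled_n] : (word_val q w).1 * (q%:~R : rat) ^ #|state A|%:Z \is a Num.int.
  apply: (word_val_fst_scaled_int q_gt0) => i.
  rewrite -lerBlDl sub0r.
  exact: (accepted_prefix_height_ge height0 i s_init s'_final run_w).
exists n; rewrite -scaled_n mulfK // expf_neq0 // intr_eq0 -lt0n //.
Qed.
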